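(* Let $T$ be a finite abelian group, written multiplicatively, and let $F: T\times T\to \{z\in\mathbb{C}: |z|=1\}$ be a map satisfying, for all $K,K_1,K_2,L,L_1,L_2\in T$, $$F(K_1K_2,L)=F(K_1,L)F(K_2,L),\qquad F(K,L_1L_2)=F(K,L_1)F(K,L_2),\qquad F(K,L)=\overline{F(L,K)}.$$ Let $\mathcal{S}$ be a subgroup of $T$ and let $\mathcal{U}=\{J\in\mathcal{S} : F(K,J)=1 \text{ for all } K\in\mathcal{S}\}$. Suppose $X\in T$ satisfies $F(X,K)=1$ for all $K\in\mathcal{U}$. Then there exists $R\in X\mathcal{S}$ such that $F(R,K)=1$ for all $K\in\mathcal{S}$, and such an element $R$ is unique up to multiplication by elements of $\mathcal{U}$.
   Context: This is the group-theoretic content of the statement that untwisted orbit representatives exist: here $T$ plays the role of the group of simple currents fixing a given primary field $a$, $F(K,L)=F(a,K,L)$ is the simple current twist on $a$, $\mathcal{S}$ is the stabilizer of $a$ in the extension group, $\mathcal{U}$ is the untwisted stabilizer, and $X$ is a representative (fixing $a$) of a coset of the extension group. *)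

From HB Require Import structures.
From mathcomp Require Import all_boot all_order all_algebra all_fingroup all_field.
Set Implicit Arguments. Unset Strict Implicit. Unset Printing Implicit Defensive.
Import GRing.Theory Num.Theory.

Local Open Scope group_scope.

Definition untwisted (gT : finGroupType) (F : gT -> gT -> algC) (S : {set gT})
  : {set gT} :=
  [set J in S | [forall K in S, F K J == 1%R]].

From HB Require Import structures.
From mathcomp Require Import all_boot all_order all_algebra all_fingroup all_field.
Set Implicit Arguments. Unset Strict Implicit. Unset Printing Implicit Defensive.
Import GRing.Theory Num.Theory.
Local Open Scope ring_scope.

(* Orthogonality of characters: summing [F (X * J) K] over [J, K] in [S]
   gives [#|S| * #|U|], which is nonzero, so some row [K |-> F (X * J) K] is
   the trivial character of [S]; [R := X * J] then works.  Two such [R] differ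
   by an element of [S] that [F] pairs trivially with [S], i.e. of [U]. *)

Lemma sum_hom_neq1_eq0 (R : idomainType) (gT : finGroupType) (S : {group gT})
    (g : gT -> R) K0 :
  {in S &, {morph g : a b / (a * b)%g >-> a * b}} ->
  K0 \in S -> g K0 != 1 -> \sum_(K in S) g K = 0.
Proof.
move=> gM K0S gK0_neq1.
have sum_fixed : \sum_(K in S) g K = g K0 * \sum_(K in S) g K.
  rewrite {1}(reindex_inj (mulgI K0)) /= mulr_sumr.
  apply: eq_big => [K | K]; rewrite /= groupMl //.
  by move=> KS; rewrite gM.
have : (1 - g K0) * \sum_(K in S) g K = 0 by rewrite mulrBl -sum_fixed mul1r subrr.
by move/eqP; rewrite mulf_eq0 subr_eq0 eq_sym (negbTE gK0_neq1) => /eqP.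
Qed.

Section Bicharacter.

Variables (gT : finGroupType) (F : gT -> gT -> algC).
Hypothesis FMl : forall K1 K2 L, F (K1 * K2)%g L = F K1 L * F K2 L.
Hypothesis FMr : forall K L1 L2, F K (L1 * L2)%g = F K L1 * F K L2.
Hypothesis F_neq0 : forall K L, F K L != 0.

Lemma F1r K : F K 1%g = 1.
Proof. by apply: (mulfI (F_neq0 K 1%g)); rewrite mulr1 -FMr mulg1. Qed.

Lemma FVr_eq1 K L : F K L = 1 -> F K L^-1%g = 1.
Proof. by move=> FKL1; rewrite -[LHS]mulr1 -FKL1 -FMr mulVg F1r. Qed.

Variable S : {group gT}.

Lemma untwisted1 : (1%g : gT) \in untwisted F S.
Proof. by rewrite inE group1; apply/forall_inP => K _; rewrite F1r. Qed.

Lemma sum_F_untwisted K : K \in S ->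
  \sum_(J in S) F J K = (K \in untwisted F S)%:R * #|S|%:R.
Proof.
move=> KS; rewrite inE KS /=; case: forall_inP => [FK1 | /forall_inP FK_neq1].
  by rewrite mul1r (eq_bigr (fun _ => 1)) ?sumr_const // => J /FK1/eqP.
rewrite mul0r; move: FK_neq1; rewrite negb_forall_in => /exists_inP[J JS FJK].
by apply: (sum_hom_neq1_eq0 (g := F^~ K) _ JS FJK) => a b _ _; rewrite FMl.
Qed.

Lemma exists_untwisted_in_coset X :
    (forall K, K \in untwisted F S -> F X K = 1) ->
  exists2 J, J \in S & forall K, K \in S -> F (X * J)%g K = 1.
Proof.
move=> FX_U.
have double_sum : \sum_(J in S) \sum_(K in S) F (X * J)%g K
                  = (#|untwisted F S| * #|S|)%:R.
  rewrite exchange_big /=.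
  under eq_bigr => K KS.
    rewrite (eq_bigr (fun J => F X K * F J K)) => [|J _]; last exact: FMl.
    by rewrite -mulr_sumr sum_F_untwisted // over.
  rewrite (bigID (fun K => K \in untwisted F S)) /= [Y in _ + Y]big1 ?addr0; last first.
    by move=> K /andP[_ /negbTE KnU]; rewrite KnU mul0r mulr0.
  have subU K : (K \in S) && (K \in untwisted F S) = (K \in untwisted F S).
    by rewrite andb_idl // inE => /andP[].
  rewrite (eq_bigl _ _ subU) (eq_bigr (fun _ => #|S|%:R)) => [|K KU].
    by rewrite sumr_const natrM mulr_natl.
  by rewrite KU FX_U // !mul1r.
have total_neq0 : \sum_(J in S) \sum_(K in S) F (X * J)%g K != 0.
  rewrite double_sum pnatr_eq0 muln_eq0 negb_or -!lt0n cardG_gt0 andbT.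
  by apply/card_gt0P; exists 1%g; apply: untwisted1.
have [J JS sumJ_neq0] : exists2 J, J \in S & \sum_(K in S) F (X * J)%g K != 0.
  apply/exists_inP; apply: contraNT total_neq0 => /exists_inPn sum0.
  by rewrite big1 // => J /sum0/negPn/eqP.
exists J => // K KS; apply/eqP; apply: contraNT sumJ_neq0 => FK_neq1.
apply/eqP; apply: (sum_hom_neq1_eq0 (g := F (X * J)%g) _ KS FK_neq1) => a b _ _.
exact: FMr.
Qed.

Hypothesis F_eq1C : forall K L, F K L = 1 -> F L K = 1.

Lemma untwisted_lcoset R R' :
    R' \in (R *: S)%g -> (forall K, K \in S -> F R K = 1) ->
  (forall K, K \in S -> F R' K = 1) <-> R' \in (R *: untwisted F S)%g.
Proof.
rewrite !mem_lcoset => RVR'_S FR1; rewrite inE RVR'_S /=.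
have FK_RVR' K : K \in S -> F K (R^-1 * R')%g = F K R'.
  by move=> KS; rewrite FMr FVr_eq1 ?mul1r //; apply/F_eq1C/FR1.
split=> [FR'1 | /forall_inP FR'1 K KS].
  by apply/forall_inP => K KS; rewrite FK_RVR' //; apply/eqP/F_eq1C/FR'1.
by apply: F_eq1C; rewrite -FK_RVR' //; apply/eqP/FR'1.
Qed.

End Bicharacter.

Theorem mainTheorem1 (gT : finGroupType) (F : gT -> gT -> algC)
  (S : {group gT}) (X : gT) :
  abelian [set: gT] ->
  (forall K L, `|F K L| = 1%R) ->
  (forall K1 K2 L, F (K1 * K2)%g L = (F K1 L * F K2 L)%R) ->
  (forall K L1 L2, F K (L1 * L2)%g = (F K L1 * F K L2)%R) ->
  (forall K L, F K L = (F L K)^*%R) ->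
  (forall K, K \in untwisted F S -> F X K = 1%R) ->
  exists2 R, R \in (X *: S)%g &
    (forall K, K \in S -> F R K = 1%R) /\
    (forall R', R' \in (X *: S)%g ->
       ((forall K, K \in S -> F R' K = 1%R) <-> R' \in (R *: untwisted F S)%g)).
Proof.
move=> _ Fnorm FMl FMr Fconj FX_U.
have F_neq0 K L : F K L != 0 by rewrite -normr_eq0 Fnorm oner_eq0.
have F_eq1C K L : F K L = 1 -> F L K = 1 by move=> FKL1; rewrite Fconj FKL1 conjC1.
have [J JS FXJ1] := exists_untwisted_in_coset FMl FMr F_neq0 FX_U.
have XJ_XS : (X * J)%g \in (X *: S)%g by rewrite mem_lcoset mulKg.
exists (X * J)%g => //; split=> // R' R'XS.
apply: untwisted_lcoset => //.
by rewrite lcoset_sym (lcoset_transl _ XJ_XS) lcoset_sym.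
Qed.
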